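(* Let $m\ge2$ and consider a preferential (dynamic) attachment circuit of index $m$. Let $W_n$ and $B_n$ be the numbers of white and blue external nodes after $n$ insertions. For $n\ge1$, $$\mathbb{E}[W_n^2]=\frac{(m+1)^3n^3}{(mn+n-1)(2m+1)^2}+\frac{(8m^2-m-1)(m+1)^2n^2+m(m+1)(3m^2-6m-1)n-m(2m^3+6m^2+3m+1)}{(mn+n-1)(2m+1)^2(3m+1)},$$ $$\mathbb{E}[B_n^2]=\frac{4m^2(m+1)^2}{(3m+1)^2(2m+1)^2}\,n^2+\frac{96m^4+138m^3+83m^2+18m+1}{(5m+1)(4m+1)(3m+1)^2}\cdot\frac{4(m+1)m}{(2m+1)^2}\,n+O(1)\quad(n\to\infty).$$
   Context: Preferential (dynamic) attachment circuit of index $m\ge1$: at time $0$ there is a single node labeled $0$. At each time $n\ge1$ a new node labeled $n$ is added and $m$ parents are chosen for it one at a time, with replacement, among nodes $0,\dots,n-1$. Before the $(i+1)$-th choice ($i=0,\dots,m-1$), each existing node $v$ is chosen with probability $\frac{d_i(v)+1}{\sum_{x}(d_i(x)+1)}$, where $d_i(x)$ is the outdegree of $x$ in the current multigraph including the edges created by the first $i$ choices for node $n$; after each choice an edge from the chosen parent to node $n$ is immediately added (multi-edges allowed, counted with multiplicity). External nodes: a node of outdegree $s$ carries $s+1$ external nodes, colored white if the node has outdegree $0$, blue if outdegree $1$, red if outdegree $\ge2$. Thus $W_n$ equals the number of nodes of outdegree $0$ and $B_n$ equals twice the number of nodes of outdegree $1$. *)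

From mathcomp Require Import all_boot all_order all_algebra.
Set Implicit Arguments. Unset Strict Implicit. Unset Printing Implicit Defensive.
Import Order.TTheory GRing.Theory Num.Theory.
Local Open Scope ring_scope.

(* A finitely supported distribution: a list of (probability, outcome) pairs
   (outcomes may repeat; their weights add up). *)
Definition dist (A : Type) := seq (rat * A).

Definition dist_bind (A B : Type) (D : dist A) (f : A -> dist B) : dist B :=
  flatten [seq [seq (pa.1 * qb.1, qb.2) | qb <- f pa.2] | pa <- D].

Definition expect (A : Type) (D : dist A) (X : A -> rat) : rat :=
  \sum_(pa <- D) pa.1 * X pa.2.

(* The state of the circuit is the sequence of outdegrees d(0), ..., d(k-1)
   of the existing nodes 0..k-1 (multi-edges counted with multiplicity). *)
Definition choose_parent (s : seq nat) : dist (seq nat) :=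
  [seq (((nth 0 s i).+1)%:R / (sumn s + size s)%:R, incr_nth s i)
  | i <- iota 0 (size s)].

Definition insert_node (m : nat) (s : seq nat) : dist (seq nat) :=
  [seq (pt.1, rcons pt.2 0%N)
  | pt <- iter m (fun D => dist_bind D choose_parent) [:: (1, s)]].

Definition pa_circuit (m n : nat) : dist (seq nat) :=
  iter n (fun D => dist_bind D (insert_node m)) [:: (1, [:: 0%N])].

(* White external nodes: number of nodes of outdegree 0.
   Blue external nodes: twice the number of nodes of outdegree 1. *)
Definition white (s : seq nat) : nat := count (fun d => d == 0%N) s.
Definition blue (s : seq nat) : nat := 2 * count (fun d => d == 1%N) s.

From mathcomp Require Import all_boot all_order all_algebra.
From mathcomp Require Import ring lra zify.
Set Implicit Arguments. Unset Strict Implicit. Unset Printing Implicit Defensive.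
Import Order.TTheory GRing.Theory Num.Theory.
Local Open Scope ring_scope.

(* Only W (nodes of outdegree 0), O (nodes of outdegree 1) and the total weight
   T = sum_x (d(x) + 1) matter: one parent choice moves (W, O) to (W - 1, O + 1)
   with probability W / T, to (W, O - 1) with probability 2 O / T, and leaves it
   unchanged otherwise, while T grows by 1.  On polynomials of degree at most 2
   in (W, O) this step is triangular, with eigenpolynomials
   1, W, O - W, W (W - 1), W (O - W + 1), (O - W)^2 - W - O whose conditional
   means get multiplied by 1 - d / T for d = 0, 1, 2, 2, 3, 4.  Hence
   (T - 1) ... (T - d) times such an eigenpolynomial is a martingale during the m
   parent choices of an insertion, and appending the new white node mixes the
   eigenpolynomials triangularly.  Their means thus obey a triangular linear
   recursion in n, solved exactly in partial fractions in x = (m + 1) n.  E[W^2]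
   and E[O^2] = E[B^2] / 4 are fixed combinations of these means, and the simple
   poles at x = 1, 2, 3 contribute only O(1). *)

Section Expectation.
Variables A B : Type.

Lemma expect_bind (D : dist A) (f : A -> dist B) (X : B -> rat) :
  expect (dist_bind D f) X = expect D (fun a => expect (f a) X).
Proof.
rewrite /expect /dist_bind big_flatten /= big_map.
apply: eq_bigr => p _; rewrite big_map mulr_sumr.
by apply: eq_bigr => q _; rewrite mulrA.
Qed.

Lemma expect_point (a : A) (X : A -> rat) : expect [:: (1, a)] X = X a.
Proof. by rewrite /expect big_seq1 mul1r. Qed.

Lemma expect_map (D : dist A) (f : A -> B) (X : B -> rat) :
  expect [seq (p.1, f p.2) | p <- D] X = expect D (fun a => X (f a)).
Proof. by rewrite /expect big_map. Qed.

Lemma expectD (D : dist A) (X Y : A -> rat) :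
  expect D (fun a => X a + Y a) = expect D X + expect D Y.
Proof. by rewrite /expect -big_split; apply: eq_bigr => p _; rewrite mulrDr. Qed.

Lemma expectB (D : dist A) (X Y : A -> rat) :
  expect D (fun a => X a - Y a) = expect D X - expect D Y.
Proof. by rewrite /expect -sumrB; apply: eq_bigr => p _; rewrite mulrBr. Qed.

Lemma expectZ (D : dist A) (c : rat) (X : A -> rat) :
  expect D (fun a => c * X a) = c * expect D X.
Proof. by rewrite /expect mulr_sumr; apply: eq_bigr => p _; rewrite mulrCA. Qed.

End Expectation.

Lemma eq_expect_in (A : eqType) (D : dist A) (X Y : A -> rat) :
  (forall p, p \in D -> X p.2 = Y p.2) -> expect D X = expect D Y.
Proof. by move=> eqXY; rewrite /expect; apply: eq_big_seq => p /eqXY ->. Qed.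

Lemma mem_dist_bind (A B : eqType) (D : dist A) (f : A -> dist B) q :
  q \in dist_bind D f -> exists2 p, p \in D & q.2 \in [seq r.2 | r <- f p.2].
Proof.
case/flattenP=> _ /mapP[p pD ->] /mapP[r rf ->].
by exists p; last exact: (map_f snd rf).
Qed.

Definition weight (s : seq nat) : nat := sumn s + size s.

Lemma sumn_incr_nth (s : seq nat) (i : nat) : sumn (incr_nth s i) = (sumn s).+1.
Proof.
elim: s i => [|x s IHs] [|i] //=; last by rewrite IHs addnS.
by elim: i => //= i ->.
Qed.

Lemma weight_incr_nth (s : seq nat) (i : nat) :
  (i < size s)%N -> weight (incr_nth s i) = (weight s).+1.
Proof. by move=> lt_i_s; rewrite /weight sumn_incr_nth size_incr_nth lt_i_s. Qed.

Lemma weight_rcons0 (s : seq nat) : weight (rcons s 0%N) = (weight s).+1.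
Proof. by rewrite /weight sumn_rcons size_rcons addn0 addnS. Qed.

Lemma weight_choose_parent (s t : seq nat) :
  t \in [seq p.2 | p <- choose_parent s] -> weight t = (weight s).+1.
Proof.
rewrite -map_comp => /mapP[i]; rewrite mem_iota add0n => /andP[_ lt_i_s] ->.
exact: weight_incr_nth.
Qed.

Definition choices (i : nat) (s : seq nat) : dist (seq nat) :=
  iter i (fun D => dist_bind D choose_parent) [:: (1, s)].

Lemma weight_choices (i : nat) (s : seq nat) p :
  p \in choices i s -> weight p.2 = (weight s + i)%N.
Proof.
elim: i p => [|i IHi] p; first by rewrite inE addn0 => /eqP ->.
case/mem_dist_bind=> q /IHi Wq /weight_choose_parent ->.
by rewrite Wq addnS.
Qed.

Lemma expect_pa_circuitS (m k : nat) (X : seq nat -> rat) :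
  expect (pa_circuit m k.+1) X =
  expect (pa_circuit m k) (fun s => expect (choices m s) (fun t => X (rcons t 0%N))).
Proof.
rewrite [in LHS]/pa_circuit iterS expect_bind.
by apply: eq_bigr => p _; rewrite /insert_node (expect_map _ (fun t => rcons t 0%N)).
Qed.

Lemma weight_pa_circuit (m k : nat) p :
  p \in pa_circuit m k -> weight p.2 = (m.+1 * k).+1.
Proof.
elim: k p => [|k IHk] p; first by rewrite inE muln0 => /eqP ->.
case/mem_dist_bind=> q /IHk Wq; rewrite /insert_node -map_comp => /mapP[r].
move=> /weight_choices + ->; rewrite /= weight_rcons0 Wq => ->.
by rewrite mulnS addSn addnC.
Qed.

Lemma choices_single (i : nat) : choices i [:: 0%N] = [:: (1, [:: i])].
Proof.
elim: i => // i IHi; rewrite /choices iterS -/(choices i _) IHi.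
by rewrite /dist_bind /choose_parent /= addn0 addn1 mul1r divff // pnatr_eq0.
Qed.

Lemma pa_circuit_one (m : nat) : pa_circuit m 1 = [:: (1, [:: m; 0%N])].
Proof.
by rewrite /pa_circuit /= /dist_bind /insert_node /= -/(choices m _) choices_single /= mul1r.
Qed.

Definition ones (s : seq nat) : nat := count (fun d => d == 1%N) s.
Definition wq (s : seq nat) : rat := (white s)%:R.
Definition oq (s : seq nat) : rat := (ones s)%:R.

Lemma wq_cons (d : nat) (s : seq nat) : wq (d :: s) = wq s + (d == 0%N)%:R.
Proof. by rewrite /wq /white /= natrD addrC. Qed.

Lemma oq_cons (d : nat) (s : seq nat) : oq (d :: s) = oq s + (d == 1%N)%:R.
Proof. by rewrite /oq /ones /= natrD addrC. Qed.

Lemma weight_cons (d : nat) (s : seq nat) :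
  (weight (d :: s))%:R = (weight s)%:R + d%:R + 1 :> rat.
Proof. by rewrite /weight /= addnS -natr1 !natrD; ring. Qed.

Lemma sum_choose_parent (g : rat -> rat -> rat) (s : seq nat) :
  \sum_(i <- iota 0 (size s)) (nth 0%N s i).+1%:R * g (wq (incr_nth s i)) (oq (incr_nth s i))
  = wq s * g (wq s - 1) (oq s + 1) + 2 * oq s * g (wq s) (oq s - 1)
    + ((weight s)%:R - wq s - 2 * oq s) * g (wq s) (oq s).
Proof.
elim: s g => [|d s IHs] g; first by rewrite big_nil /wq /oq /weight /=; ring.
rewrite /= big_cons -[iota 1 _]/(iota (1 + 0) _) iotaDl big_map.
under eq_bigr do rewrite add1n /= wq_cons oq_cons.
(* The tail sees g shifted by the contribution of the head d to W and O. *)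
rewrite (IHs (fun w o => g (w + (d == 0%N)%:R) (o + (d == 1%N)%:R))).
rewrite weight_cons !wq_cons !oq_cons.
rewrite [wq s - 1 + _]addrAC [oq s + 1 + _]addrAC [oq s - 1 + _]addrAC.
by case: d => [|[|d]] /=; rewrite ?addr0 ?addrK; ring.
Qed.

Lemma expect_choose_parent (g : rat -> rat -> rat) (s : seq nat) : (0 < weight s)%N ->
  (weight s)%:R * expect (choose_parent s) (fun t => g (wq t) (oq t))
  = wq s * g (wq s - 1) (oq s + 1) + 2 * oq s * g (wq s) (oq s - 1)
    + ((weight s)%:R - wq s - 2 * oq s) * g (wq s) (oq s).
Proof.
move=> s_gt0; rewrite -sum_choose_parent /expect /choose_parent big_map mulr_sumr.
apply: eq_bigr => i _ /=; rewrite mulrA mulrCA -/(weight s) divff ?mulr1 //.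
by rewrite pnatr_eq0 -lt0n.
Qed.

Definition eigenpoly (a : nat) (w o : rat) : rat :=
  match a with
  | 0 => 1
  | 1 => w
  | 2 => o - w
  | 3 => w * (w - 1)
  | 4 => w * (o - w + 1)
  | _ => (o - w) ^+ 2 - w - o
  end.

Definition decay (a : nat) : nat :=
  match a with 0 => 0 | 1 => 1 | 2 | 3 => 2 | 4 => 3 | _ => 4 end.

Lemma eigenpoly_transition (a : nat) (T w o : rat) :
  w * eigenpoly a (w - 1) (o + 1) + 2 * o * eigenpoly a w (o - 1)
  + (T - w - 2 * o) * eigenpoly a w o = (T - (decay a)%:R) * eigenpoly a w o.
Proof. by case: a => [|[|[|[|[|a]]]]] /=; ring. Qed.

Definition shift_white (f : nat -> rat) (a : nat) : rat :=
  match a with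
  | 0 => f 0%N
  | 1 => f 1%N + f 0%N
  | 2 => f 2%N - f 0%N
  | 3 => f 3%N + 2 * f 1%N
  | 4 => f 4%N + f 2%N - f 1%N
  | _ => f 5%N - 2 * f 2%N
  end.

Lemma eigenpoly_shift_white (a : nat) (w o : rat) :
  eigenpoly a (w + 1) o = shift_white (fun b => eigenpoly b w o) a.
Proof. by case: a => [|[|[|[|[|a]]]]] /=; ring. Qed.

Lemma eq_shift_white (f g : nat -> rat) (a : nat) :
  (forall b, f b = g b) -> shift_white f a = shift_white g a.
Proof. by move=> fg; case: a => [|[|[|[|[|a]]]]] /=; rewrite !fg. Qed.

Lemma expect_shift_white (A : Type) (D : dist A) (f : A -> nat -> rat) (a : nat) :
  expect D (fun x => shift_white (f x) a) = shift_white (fun b => expect D (f^~ b)) a.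
Proof.
by case: a => [|[|[|[|[|a]]]]] /=; rewrite ?expectB ?expectD ?expectZ.
Qed.

Fixpoint falling (d : nat) (T : rat) : rat :=
  if d is d'.+1 then falling d' T * (T - d'.+1%:R) else 1.

Lemma falling_shift (d : nat) (T : rat) : falling d (T + 1) * (T - d%:R) = T * falling d T.
Proof.
elim: d => [|d IHd] /=; first by rewrite subr0 mul1r mulr1.
have -> : T + 1 - d.+1%:R = T - d%:R by rewrite -natr1; ring.
by rewrite IHd mulrA.
Qed.

Lemma falling_neq0 (d n : nat) : (d < n)%N -> falling d n%:R != 0.
Proof.
elim: d => [|d IHd] lt_d_n //=; rewrite mulf_neq0 ?IHd 1?ltnW //.
by rewrite subr_eq0 eqr_nat gtn_eqF.
Qed.

Lemma expect_choose_parent_eigen (a : nat) (s : seq nat) : (0 < weight s)%N ->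
  falling (decay a) (weight s).+1%:R * expect (choose_parent s) (fun t => eigenpoly a (wq t) (oq t))
  = falling (decay a) (weight s)%:R * eigenpoly a (wq s) (oq s).
Proof.
move=> s_gt0; apply: (mulfI (_ : (weight s)%:R != 0)); first by rewrite pnatr_eq0 -lt0n.
rewrite mulrCA expect_choose_parent // eigenpoly_transition mulrA -natr1 falling_shift.
by rewrite mulrA.
Qed.

Lemma expect_choices_eigen (a i : nat) (s : seq nat) : (0 < weight s)%N ->
  falling (decay a) (weight s + i)%:R * expect (choices i s) (fun t => eigenpoly a (wq t) (oq t))
  = falling (decay a) (weight s)%:R * eigenpoly a (wq s) (oq s).
Proof.
move=> s_gt0; elim: i => [|i IHi]; first by rewrite addn0 expect_point.
rewrite /choices iterS -/(choices i s) expect_bind -expectZ -IHi -expectZ.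
apply: eq_expect_in => p /weight_choices Wp.
by rewrite addnS -Wp expect_choose_parent_eigen // Wp addn_gt0 s_gt0.
Qed.

Definition mean_eigen (m k a : nat) : rat :=
  expect (pa_circuit m k) (fun s => eigenpoly a (wq s) (oq s)).

Lemma wq_rcons0 (s : seq nat) : wq (rcons s 0%N) = wq s + 1.
Proof. by rewrite /wq /white -cats1 count_cat natrD. Qed.

Lemma oq_rcons0 (s : seq nat) : oq (rcons s 0%N) = oq s.
Proof. by rewrite /oq /ones -cats1 count_cat addn0. Qed.

Lemma mean_eigenS (m k a : nat) : (2 <= m)%N -> (1 <= k)%N ->
  let T := (m.+1 * k).+1%:R in
  mean_eigen m k.+1 a =
  shift_white (fun b => falling (decay b) T / falling (decay b) (T + m%:R) * mean_eigen m k b) a.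
Proof.
move=> m_ge2 k_ge1 T; rewrite /mean_eigen expect_pa_circuitS.
pose rho b := falling (decay b) T / falling (decay b) (T + m%:R).
transitivity (expect (pa_circuit m k)
  (fun s => shift_white (fun b => rho b * eigenpoly b (wq s) (oq s)) a)); last first.
  by rewrite expect_shift_white; apply: eq_shift_white => b; rewrite expectZ.
apply: eq_expect_in => p /weight_pa_circuit Wp.
rewrite (eq_expect_in (Y := fun t =>
  shift_white (fun b => eigenpoly b (wq t) (oq t)) a)); last first.
  by move=> q _; rewrite wq_rcons0 oq_rcons0 eigenpoly_shift_white.
rewrite expect_shift_white; apply: eq_shift_white => b.
have := expect_choices_eigen b m (_ : 0 < weight p.2)%N; rewrite Wp natrD => /(_ isT) eqF.
have F1_neq0 : falling (decay b) (T + m%:R) != 0.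
  have decay_le4 : (decay b <= 4)%N by case: (b) => [|[|[|[|[|?]]]]].
  by rewrite -natrD falling_neq0 //; nia.
by rewrite -[LHS](mulKf F1_neq0) eqF /rho; ring.
Qed.

Lemma mean_eigen_one (m a : nat) : (2 <= m)%N -> mean_eigen m 1 a = eigenpoly a 1 0.
Proof.
case: m => [|[|m]] // _.
by rewrite /mean_eigen pa_circuit_one expect_point /wq /oq /white /ones /= !add0n.
Qed.

(* The means mean_eigen m n a in terms of x = (m + 1) n, found by solving the
   recursion mean_eigenS.  They hold only from n = 2 on: for m = 2 and n = 1 the
   pole of mean_poles at x = 3 is hit. *)
Definition poles (p1 p2 p3 x : rat) : rat := p1 / (x - 1) + p2 / (x - 2) + p3 / (x - 3).

Definition mean_poly (M x : rat) (a : nat) : rat :=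
  match a with
  | 0 => 1
  | 1 => (x + M) / (2 * M + 1)
  | 2 => - (2 * x + 3 * M - 1) / (2 * (3 * M + 1))
  | 3 => x ^+ 2 / (2 * M + 1) ^+ 2
         + ((2 * M ^+ 2 - 3 * M - 1) * x - 3 * M ^+ 2 * (M + 1)) / ((2 * M + 1) ^+ 2 * (3 * M + 1))
  | 4 => - x ^+ 2 / ((2 * M + 1) * (3 * M + 1))
         + ((- 8 * M ^+ 2 + 13 * M + 3) * x + 4 * M * (M + 1) * (2 * M - 1))
           / (2 * (2 * M + 1) * (3 * M + 1) * (4 * M + 1))
  | _ => x ^+ 2 / (3 * M + 1) ^+ 2
         + (8 * (3 * M ^+ 2 - 6 * M - 1) * x + (M + 1) * (- 25 * M ^+ 2 + 22 * M - 1))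
           / (4 * (3 * M + 1) ^+ 2 * (5 * M + 1))
  end.

Definition mean_poles (M x : rat) (a : nat) : rat :=
  match a with
  | 0 | 1 => 0
  | 2 => poles (- M * (M + 1) / (2 * (3 * M + 1))) 0 0 x
  | 3 => poles (- M ^+ 2 * (M + 1) / ((2 * M + 1) * (3 * M + 1))) 0 0 x
  | 4 => poles (M * (M + 1) * (M - 1) / (2 * (3 * M + 1) * (4 * M + 1)))
               (M * (M + 1) * (M - 1) / ((2 * M + 1) * (4 * M + 1))) 0 x
  | _ => poles (M * (M + 1) * (M - 2) * (18 * M ^+ 4 - 9 * M ^+ 3 + 5 * M ^+ 2 + 5 * M + 5)
                 / (8 * (3 * M + 1) ^+ 2 * (3 * M - 1) * (5 * M + 1)))
               (- M * (M + 1) * (M - 1) ^+ 2 * (3 * M ^+ 2 + 5)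
                 / (2 * (3 * M + 1) * (3 * M - 1) * (5 * M + 1)))
               (M * (M + 1) * (M - 2) * (2 * M - 1) * (9 * M ^+ 3 + 15 * M ^+ 2 - 37 * M - 11)
                 / (8 * (3 * M + 1) ^+ 2 * (3 * M - 1) * (5 * M + 1))) x
  end.

Definition mean_closed (M x : rat) (a : nat) : rat := mean_poly M x a + mean_poles M x a.

Ltac nonzero := repeat (apply/andP; split); try done; apply/eqP; first [lra | nra].

Lemma mean_closed_base (M : rat) (a : nat) : 2 <= M ->
  mean_closed M (M + 1 + (M + 1)) a =
  shift_white (fun b => falling (decay b) (M + 1 + 1) / falling (decay b) (M + 1 + 1 + M)
                        * eigenpoly b 1 0) a.
Proof.
move=> M_ge2; rewrite /mean_closed /mean_poly /mean_poles /poles.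
by case: a => [|[|[|[|[|a]]]]] /=; field; nonzero.
Qed.

Lemma mean_closed_step (M x : rat) (a : nat) : 2 <= M -> 4 <= x ->
  mean_closed M (x + (M + 1)) a =
  shift_white (fun b => falling (decay b) (x + 1) / falling (decay b) (x + 1 + M)
                        * mean_closed M x b) a.
Proof.
move=> M_ge2 x_ge4; rewrite /mean_closed /mean_poly /mean_poles /poles.
by case: a => [|[|[|[|[|a]]]]] /=; field; nonzero.
Qed.

Lemma mean_eigenE (m k a : nat) : (2 <= m)%N -> (2 <= k)%N ->
  mean_eigen m k a = mean_closed m%:R ((m%:R + 1) * k%:R) a.
Proof.
move=> m_ge2; have M_ge2 : 2 <= m%:R :> rat by rewrite ler_nat.
elim: k a => [|k IHk] a // k_ge1.
have k_gt0 : (1 <= k)%N by lia.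
have -> : (m%:R + 1) * k.+1%:R = (m%:R + 1) * k%:R + (m%:R + 1) :> rat.
  by rewrite -natr1; ring.
rewrite mean_eigenS // -natr1 natrM -natr1.
have [k_lt2 | k_ge2] := ltnP k 2.
  have -> : k = 1%N by lia.
  rewrite mulr1 mean_closed_base //; apply: eq_shift_white => b.
  by rewrite mean_eigen_one.
rewrite mean_closed_step //; last first.
  have : 2 <= k%:R :> rat by rewrite ler_nat.
  nra.
by apply: eq_shift_white => b; rewrite IHk.
Qed.

Definition bounded_eventually (u : nat -> rat) : Prop :=
  exists (C : rat) (N : nat), forall n, (N <= n)%N -> `|u n| <= C.

Lemma bounded_eventually_eq (u v : nat -> rat) (N : nat) :
  (forall n, (N <= n)%N -> u n = v n) -> bounded_eventually v -> bounded_eventually u.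
Proof.
move=> eq_uv [C [Nv bv]]; exists C, (maxn N Nv) => n.
by rewrite geq_max => /andP[/eq_uv -> /bv].
Qed.

Lemma bounded_eventually_cst (c : rat) : bounded_eventually (fun _ => c).
Proof. by exists `|c|, 0%N. Qed.

Lemma bounded_eventuallyD (u v : nat -> rat) :
  bounded_eventually u -> bounded_eventually v -> bounded_eventually (fun n => u n + v n).
Proof.
move=> [Cu [Nu bu]] [Cv [Nv bv]]; exists (Cu + Cv), (maxn Nu Nv) => n.
rewrite geq_max => /andP[/bu{}bu /bv{}bv].
by rewrite (le_trans (ler_normD _ _)) // lerD.
Qed.

Lemma bounded_eventuallyZ (c : rat) (u : nat -> rat) :
  bounded_eventually u -> bounded_eventually (fun n => c * u n).
Proof.
move=> [C [N bu]]; exists (`|c| * C), N => n /bu{}bu.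
by rewrite normrM ler_wpM2l.
Qed.

Lemma norm_poles_le (p1 p2 p3 x : rat) : 4 <= x -> `|poles p1 p2 p3 x| <= `|p1| + `|p2| + `|p3|.
Proof.
move=> x_ge4.
have div_le (p y : rat) : 1 <= y -> `|p / y| <= `|p|.
  move=> y_ge1; have y_gt0 : 0 < y by lra.
  by rewrite normrM normfV (gtr0_norm y_gt0) ler_pdivrMr // ler_peMr.
rewrite /poles (le_trans (ler_normD _ _)) // lerD ?div_le //; last by lra.
by rewrite (le_trans (ler_normD _ _)) // lerD ?div_le //; lra.
Qed.

Lemma bounded_poles (p1 p2 p3 : rat) (x : nat -> rat) (N : nat) :
  (forall n, (N <= n)%N -> 4 <= x n) -> bounded_eventually (fun n => poles p1 p2 p3 (x n)).
Proof.
move=> x_ge4; exists (`|p1| + `|p2| + `|p3|), N => n /x_ge4.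
exact: norm_poles_le.
Qed.

Lemma bounded_mean_poles (M : rat) (a : nat) : 1 <= M ->
  bounded_eventually (fun n => mean_poles M ((M + 1) * n%:R) a).
Proof.
move=> M_ge1.
case: a => [|[|a]]; try exact: bounded_eventually_cst.
have x_ge4 n : (2 <= n)%N -> 4 <= (M + 1) * n%:R.
  move=> n_ge2; have : 2 <= n%:R :> rat by rewrite ler_nat.
  nra.
by case: a => [|[|[|a]]]; apply: bounded_poles x_ge4.
Qed.

Definition sq_ones_comb (f : nat -> rat) : rat := f 5%N + 2 * f 4%N + f 3%N + f 2%N + f 1%N.

Lemma expect_white_sq (m n : nat) :
  expect (pa_circuit m n) (fun s => ((white s) ^ 2)%N%:R) = mean_eigen m n 3 + mean_eigen m n 1.
Proof. by rewrite -expectD; apply: eq_expect_in => p _; rewrite natrX /=; ring. Qed.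

Lemma expect_blue_sq (m n : nat) :
  expect (pa_circuit m n) (fun s => ((blue s) ^ 2)%N%:R) = 4 * sq_ones_comb (mean_eigen m n).
Proof.
rewrite /sq_ones_comb /mean_eigen -expectZ -!expectD -expectZ.
apply: eq_expect_in => p _; rewrite /blue natrX natrM -/(ones p.2) -/(oq p.2) /=.
ring.
Qed.

Lemma blue_sq_mean_bounded (m : nat) : (2 <= m)%N ->
  let M := m%:R in
  bounded_eventually (fun n => expect (pa_circuit m n) (fun s => ((blue s) ^ 2)%N%:R)
    - 4 * (sq_ones_comb (mean_poly M ((M + 1) * n%:R)) - sq_ones_comb (mean_poly M 0))).
Proof.
move=> m_ge2 M; have M_ge1 : 1 <= M by rewrite /M ler1n; lia.
apply: (@bounded_eventually_eq _
  (fun n => 4 * sq_ones_comb (mean_poly M 0) + 4 * sq_ones_comb (mean_poles M ((M + 1) * n%:R))) 2).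
  move=> n n_ge2; rewrite expect_blue_sq.
  by rewrite /sq_ones_comb !mean_eigenE // /mean_closed; ring.
apply: bounded_eventuallyD (bounded_eventually_cst _) _; apply: bounded_eventuallyZ.
have B a := bounded_mean_poles a M_ge1.
apply: bounded_eventuallyD (B 1%N); apply: bounded_eventuallyD (B 2%N).
apply: bounded_eventuallyD (B 3%N).
exact: bounded_eventuallyD (B 5%N) (bounded_eventuallyZ 2 (B 4%N)).
Qed.

Theorem proposition3 (m : nat) (hm : (2 <= m)%N) :
  (forall n : nat, (1 <= n)%N ->
     let mq : rat := m%:R in let nq : rat := n%:R in
     expect (pa_circuit m n) (fun s => ((white s) ^ 2)%N%:R) =
       (mq + 1) ^+ 3 * nq ^+ 3 / ((mq * nq + nq - 1) * (2 * mq + 1) ^+ 2)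
     + ((8 * mq ^+ 2 - mq - 1) * (mq + 1) ^+ 2 * nq ^+ 2
        + mq * (mq + 1) * (3 * mq ^+ 2 - 6 * mq - 1) * nq
        - mq * (2 * mq ^+ 3 + 6 * mq ^+ 2 + 3 * mq + 1))
       / ((mq * nq + nq - 1) * (2 * mq + 1) ^+ 2 * (3 * mq + 1)))
  /\
  (exists (C : rat) (N : nat), forall n : nat, (N <= n)%N ->
     let mq : rat := m%:R in let nq : rat := n%:R in
     `| expect (pa_circuit m n) (fun s => ((blue s) ^ 2)%N%:R)
        - (4 * mq ^+ 2 * (mq + 1) ^+ 2
             / ((3 * mq + 1) ^+ 2 * (2 * mq + 1) ^+ 2) * nq ^+ 2
           + (96 * mq ^+ 4 + 138 * mq ^+ 3 + 83 * mq ^+ 2 + 18 * mq + 1)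
             / ((5 * mq + 1) * (4 * mq + 1) * (3 * mq + 1) ^+ 2)
             * (4 * (mq + 1) * mq / (2 * mq + 1) ^+ 2) * nq) | <= C).
Proof.
have M_ge2 : 2 <= m%:R :> rat by rewrite ler_nat.
split=> [n n_ge1 mq nq | ].
  rewrite expect_white_sq {}/mq {}/nq.
  have [n_lt2 | n_ge2] := ltnP n 2.
    have -> : n = 1%N by lia.
    by rewrite !mean_eigen_one //=; field; nonzero.
  have N_ge2 : 2 <= n%:R :> rat by rewrite ler_nat.
  rewrite !mean_eigenE // /mean_closed /mean_poly /mean_poles /poles /=.
  by field; nonzero.
have [C [N bounded_err]] := blue_sq_mean_bounded hm.
exists C, (maxn N 2) => n; rewrite geq_max => /andP[n_ge_N n_ge2]; cbv zeta.
have N_ge2 : 2 <= n%:R :> rat by rewrite ler_nat.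
set lead := (X in `|_ - X|).
have -> : lead = 4 * (sq_ones_comb (mean_poly m%:R ((m%:R + 1) * n%:R))
                      - sq_ones_comb (mean_poly m%:R 0)).
  by rewrite /lead /sq_ones_comb /mean_poly /=; field; nonzero.
exact: bounded_err.
Qed.
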